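(* Let $T$ be a doubled graph with good partition $(X,Y)$. (1) If $\{y\}$ is an anticomponent of size one of $T|Y$ and $y$ has an antineighbor $x\in X$, then $\{x,y\}$ is an even pair of $T$; in particular, if in addition $T|X$ has an edge $x_1x_2$, then one of $\{x_1,y\}$, $\{x_2,y\}$ is an even pair, so $T$ has an even pair. (2) If $T|Y$ has a strong antiedge $y_1y_2$ and $T|X$ has no edge, then $\{y_1,y_2\}$ is an even pair of $T$.
   Context: A trigraph $T$ consists of a finite set $V(T)$ and a map $\theta:\binom{V(T)}{2}\to\{-1,0,1\}$. Two distinct vertices $u,v$ are strongly adjacent if $\theta(uv)=1$, strongly antiadjacent if $\theta(uv)=-1$, and semiadjacent (a switchable pair) if $\theta(uv)=0$; they are adjacent if $\theta(uv)\in\{0,1\}$ and antiadjacent if $\theta(uv)\in\{0,-1\}$; an antineighbor of $v$ is a vertex antiadjacent to $v$. An edge (antiedge) is an adjacent (antiadjacent) pair; a strong edge (strong antiedge) is a strongly adjacent (strongly antiadjacent) pair. For $X\subseteq V(T)$, $T|X$ is the trigraph on $X$ with $\theta$ restricted. A set $X$ is connected if the graph on $X$ whose edges are the adjacent pairs is connected, and anticonnected if the graph on $X$ whose edges are the antiadjacent pairs is connected; components (anticomponents) are maximal connected (anticonnected) subsets. A path is a sequence of distinct vertices $p_1,\dots,p_k$ such that $p_i,p_j$ are adjacent when $|i-j|=1$ and antiadjacent when $|i-j|>1$; its length is $k-1$. An even pair of $T$ is a strongly antiadjacent pair $\{u,v\}$ such that every path from $u$ to $v$ in $T$ has even length. A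 good partition of $T$ is a partition $(X,Y)$ of $V(T)$ such that every component of $T|X$ and every anticomponent of $T|Y$ has at most two vertices, no switchable pair has one end in $X$ and the other in $Y$, and for every component $C_x$ of $T|X$ and every anticomponent $C_y$ of $T|Y$, every vertex of $C_x\cup C_y$ is incident with at most one strong edge and at most one strong antiedge between $C_x$ and $C_y$. $T$ is a doubled graph if it has a good partition. *)

From HB Require Import structures.
From mathcomp Require Import all_boot.
Set Implicit Arguments. Unset Strict Implicit. Unset Printing Implicit Defensive.

(* A trigraph on a finite vertex type V is a symmetric map
   th : V -> V -> tri (values on the diagonal are irrelevant):
   SAdj = theta 1, Semi = theta 0, SAnti = theta -1. *)
Inductive tri := SAdj | Semi | SAnti.

Definition tri_eqb (a b : tri) : bool :=
  match a, b with
  | SAdj, SAdj | Semi, Semi | SAnti, SAnti => true | _, _ => false end.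
Lemma tri_eqP : Equality.axiom tri_eqb.
Proof. by case; case; constructor. Qed.
HB.instance Definition _ := hasDecEq.Build tri tri_eqP.

Section Trigraph.
Variables (V : finType) (th : V -> V -> tri).

Definition strongly_adj (u v : V) : bool := (u != v) && (th u v == SAdj).
Definition strongly_anti (u v : V) : bool := (u != v) && (th u v == SAnti).
Definition semiadj (u v : V) : bool := (u != v) && (th u v == Semi).
Definition adjacent (u v : V) : bool := (u != v) && (th u v != SAnti).
Definition antiadjacent (u v : V) : bool := (u != v) && (th u v != SAdj).

Definition adj_in (X : {set V}) : rel V :=
  fun a b => [&& a \in X, b \in X & adjacent a b].
Definition anti_in (X : {set V}) : rel V :=
  fun a b => [&& a \in X, b \in X & antiadjacent a b].

Definition comp (X : {set V}) (x : V) : {set V} := [set z | connect (adj_in X) x z].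
Definition acomp (Y : {set V}) (y : V) : {set V} := [set z | connect (anti_in Y) y z].

Definition between (C D : {set V}) (v w : V) : bool :=
  ((v \in C) && (w \in D)) || ((v \in D) && (w \in C)).

Definition good_partition (X Y : {set V}) : Prop :=
  [/\ X :&: Y = set0 /\ X :|: Y = setT,
      (forall x, x \in X -> #|comp X x| <= 2),
      (forall y, y \in Y -> #|acomp Y y| <= 2),
      (forall x y, x \in X -> y \in Y -> ~~ semiadj x y) &
      (forall x y, x \in X -> y \in Y ->
         forall v, v \in comp X x :|: acomp Y y ->
           #|[set w | between (comp X x) (acomp Y y) v w && strongly_adj v w]| <= 1 /\
           #|[set w | between (comp X x) (acomp Y y) v w && strongly_anti v w]| <= 1)].

Definition doubled_graph : Prop := exists X Y, good_partition X Y.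

(* a path from u to v: a sequence p_1 = u, ..., p_k = v of distinct vertices,
   consecutive ones adjacent, non-consecutive ones antiadjacent.
   (the default u of nth is irrelevant: all indices are in range) *)
Definition is_path_between (u v : V) (s : seq V) : Prop :=
  [/\ s != [::], head u s = u, last u s = v, uniq s &
      forall i j, i < j -> j < size s ->
        (j = i.+1 -> adjacent (nth u s i) (nth u s j)) /\
        (i.+1 < j -> antiadjacent (nth u s i) (nth u s j))].

Definition path_length (s : seq V) : nat := (size s).-1.

Definition even_pair (u v : V) : Prop :=
  strongly_anti u v /\
  forall s, is_path_between u v s -> ~~ odd (path_length s).
End Trigraph.

(* All three claims are
   proved by contradiction from an odd path p_1 = u, p_2, p_3, ..., p_k = v
   between the two ends of the candidate even pair.  Since u and v are
   strongly antiadjacent, such a path has k >= 4 (odd_path_start), so p_2 is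
   adjacent to u and antiadjacent to v, and p_3 is antiadjacent to u.

   (1) For u = x in X and v = y in Y with {y} an anticomponent of T|Y, the
       vertex p_2 is not in Y (it would lie in the anticomponent of y), so it
       lies in the component of x in T|X; then y has two strong antineighbours
       x and p_2 in that component, which a good partition forbids
       (strong_antineighbour_unique).  Along an edge x_1 x_2 of T|X one of the
       ends is antiadjacent to y, since otherwise y would have two strong
       neighbours in one component (strong_neighbour_unique).
   (2) For u = y_1, v = y_2 in Y and T|X stable, the adjacent vertices p_2, p_3
       are not both in X; whichever lies in Y enlarges the anticomponent
       {y_1, y_2} to three vertices (anticomponent_no_three). *)
From Pilot Require Import Defs.
From mathcomp Require Import all_boot zify.
Set Implicit Arguments. Unset Strict Implicit. Unset Printing Implicit Defensive.

Section Trigraph.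
Variables (V : finType) (th : V -> V -> tri).
Hypothesis thC : forall u v, th u v = th v u.

Lemma antiadjacentC u v : antiadjacent th u v = antiadjacent th v u.
Proof. by rewrite /antiadjacent thC eq_sym. Qed.

Lemma strongly_antiC u v : strongly_anti th u v = strongly_anti th v u.
Proof. by rewrite /strongly_anti thC eq_sym. Qed.

Lemma strongly_anti_antiadjacent u v :
  strongly_anti th u v -> antiadjacent th u v.
Proof. by case/andP=> uv /eqP uvE; rewrite /antiadjacent uv uvE. Qed.

Lemma strongly_anti_not_adjacent u v :
  strongly_anti th u v -> ~~ adjacent th u v.
Proof. by case/andP=> _ /eqP uvE; rewrite /adjacent uvE andbF. Qed.

Lemma odd_path_start u v s :
  strongly_anti th u v -> is_path_between th u v s -> odd (path_length s) ->
  exists p2 p3, [/\ adjacent th u p2, adjacent th p2 p3,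
                    antiadjacent th p2 v, antiadjacent th u p3 & p3 != v].
Proof.
move=> uv [s_nil s_head s_last s_uniq s_path]; rewrite /path_length => s_odd.
have nth_first : nth u s 0 = u by rewrite nth0 s_head.
have nth_final : nth u s (size s).-1 = v by rewrite nth_last.
have size_pos : 0 < size s by rewrite lt0n size_eq0.
(* a path of length one would make its strongly antiadjacent ends adjacent *)
have size_ne2 : size s != 2.
  apply/eqP=> s2.
  have [/(_ erefl) adj_uv _] := s_path 0 1 erefl ltac:(by rewrite s2).
  move: (strongly_anti_not_adjacent uv).
  by rewrite -nth_first -nth_final s2 adj_uv.
have size_gt3 : 3 < size s.
  by case: (size s) size_pos size_ne2 s_odd => [|[|[|[|n]]]].
exists (nth u s 1), (nth u s 2).
have [/(_ erefl) adj01 _] := s_path 0 1 erefl ltac:(lia).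
have [/(_ erefl) adj12 _] := s_path 1 2 erefl ltac:(lia).
have [_ /(_ ltac:(lia)) anti1k] := s_path 1 (size s).-1 ltac:(lia) ltac:(lia).
have [_ /(_ ltac:(lia)) anti02] := s_path 0 2 erefl ltac:(lia).
rewrite nth_first nth_final in adj01 anti1k anti02.
have idx_ne : 2 != (size s).-1 by lia.
split=> //; rewrite -nth_final nth_uniq // ?ltn_predL //.
exact: ltn_trans size_gt3.
Qed.

Lemma mem_comp_self (X : {set V}) x : x \in Defs.comp th X x.
Proof. by rewrite inE connect0. Qed.

Lemma mem_acomp_self (Y : {set V}) y : y \in acomp th Y y.
Proof. by rewrite inE connect0. Qed.

Lemma adjacent_mem_comp (X : {set V}) x w :
  x \in X -> w \in X -> adjacent th x w -> w \in Defs.comp th X x.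
Proof. by move=> xX wX xw; rewrite inE connect1 // /adj_in xX wX. Qed.

Lemma antiadjacent_mem_acomp (Y : {set V}) y w :
  y \in Y -> w \in Y -> antiadjacent th y w -> w \in acomp th Y y.
Proof. by move=> yY wY yw; rewrite inE connect1 // /anti_in yY wY. Qed.

Section GoodPartition.
Variables X Y : {set V}.
Hypothesis gp : good_partition th X Y.

Lemma in_X_or_Y v : (v \in X) || (v \in Y).
Proof. by case: gp => [[_ XUY] _ _ _ _]; rewrite -in_setU XUY in_setT. Qed.

Lemma X_Y_neq x y : x \in X -> y \in Y -> y != x.
Proof.
case: gp => [[XIY _] _ _ _ _] xX yY; apply/eqP=> yx; subst y.
by have := in_set0 x; rewrite -XIY inE xX yY.
Qed.

(* No pair between X and Y is switchable, so it is strong either way. *)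
Lemma cross_antiadjacent x y :
  x \in X -> y \in Y -> antiadjacent th x y -> strongly_anti th y x.
Proof.
case: gp => [_ _ _ no_semi _] xX yY /andP[_ xy_nadj].
have := no_semi x y xX yY.
rewrite /semiadj /strongly_anti [x == y]eq_sym X_Y_neq // (thC y x) /=.
by case: (th x y) xy_nadj.
Qed.

Lemma cross_not_antiadjacent x y :
  x \in X -> y \in Y -> ~~ antiadjacent th x y -> strongly_adj th y x.
Proof.
move=> xX yY.
rewrite /antiadjacent /strongly_adj [x == y]eq_sym X_Y_neq // (thC y x) /=.
by case: (th x y).
Qed.

Lemma strong_antineighbour_unique x y v w1 w2 :
  x \in X -> y \in Y -> v \in acomp th Y y ->
  w1 \in Defs.comp th X x -> w2 \in Defs.comp th X x ->
  strongly_anti th v w1 -> strongly_anti th v w2 -> w1 = w2.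
Proof.
case: gp => [_ _ _ _ card_strong] xX yY vA w1C w2C vw1 vw2.
have [_ /card_le1_eqP] := card_strong x y xX yY v ltac:(by rewrite inE vA orbT).
by apply; rewrite inE /between vA ?w1C ?w2C orbT.
Qed.

Lemma strong_neighbour_unique x y v w1 w2 :
  x \in X -> y \in Y -> v \in acomp th Y y ->
  w1 \in Defs.comp th X x -> w2 \in Defs.comp th X x ->
  strongly_adj th v w1 -> strongly_adj th v w2 -> w1 = w2.
Proof.
case: gp => [_ _ _ _ card_strong] xX yY vA w1C w2C vw1 vw2.
have [/card_le1_eqP + _] := card_strong x y xX yY v ltac:(by rewrite inE vA orbT).
by apply; rewrite inE /between vA ?w1C ?w2C orbT.
Qed.

Lemma anticomponent_no_three y a b c :
  y \in Y -> a \in acomp th Y y -> b \in acomp th Y y -> c \in acomp th Y y ->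
  a != b -> b != c -> c != a -> False.
Proof.
case: gp => [_ _ card_acomp _ _] yY aA bA cA ab bc ca.
have := card_acomp y yY; rewrite leqNgt => /negP; apply.
by apply/card_gt2P; exists a, b, c.
Qed.

Lemma even_pair_singleton_anticomponent x y :
  x \in X -> y \in Y -> acomp th Y y = [set y] -> antiadjacent th x y ->
  even_pair th x y.
Proof.
move=> xX yY yA xy; have yx := cross_antiadjacent xX yY xy.
have xy_strong : strongly_anti th x y by rewrite strongly_antiC.
split=> // s xy_path; apply/negP=> s_odd.
have [p2 [_ [x_p2 _ p2_y _ _]]] := odd_path_start xy_strong xy_path s_odd.
have p2X : p2 \in X.
  case/orP: (in_X_or_Y p2) => // p2Y.
  have := antiadjacent_mem_acomp yY p2Y ltac:(by rewrite antiadjacentC).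
  by rewrite yA inE; case/andP: p2_y => /negPf->.
have x_eq_p2 : x = p2.
  apply: (strong_antineighbour_unique xX yY (mem_acomp_self Y y)) yx _.
  - exact: mem_comp_self.
  - exact: adjacent_mem_comp.
  - exact: cross_antiadjacent.
by move: x_p2; rewrite /adjacent x_eq_p2 eqxx.
Qed.

Lemma even_pair_along_edge x1 x2 y :
  x1 \in X -> x2 \in X -> y \in Y -> acomp th Y y = [set y] ->
  adjacent th x1 x2 -> even_pair th x1 y \/ even_pair th x2 y.
Proof.
move=> x1X x2X yY yA x12.
have [x1y|x1y] := boolP (antiadjacent th x1 y).
  by left; apply: even_pair_singleton_anticomponent.
have [x2y|x2y] := boolP (antiadjacent th x2 y).
  by right; apply: even_pair_singleton_anticomponent.
have x1_eq_x2 : x1 = x2.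
  apply: (strong_neighbour_unique x1X yY (mem_acomp_self Y y)).
  - exact: mem_comp_self.
  - exact: adjacent_mem_comp.
  - exact: cross_not_antiadjacent.
  - exact: cross_not_antiadjacent.
by move: x12; rewrite /adjacent x1_eq_x2 eqxx.
Qed.

Lemma even_pair_strong_antiedge y1 y2 :
  y1 \in Y -> y2 \in Y -> strongly_anti th y1 y2 ->
  (forall a b, a \in X -> b \in X -> ~~ adjacent th a b) ->
  even_pair th y1 y2.
Proof.
move=> y1Y y2Y y12 X_stable; split=> // s y12_path; apply/negP=> s_odd.
have [p2 [p3 [y1_p2 p23 p2_y2 y1_p3 p3_y2]]] := odd_path_start y12 y12_path s_odd.
have y1_y2 : antiadjacent th y1 y2 := strongly_anti_antiadjacent y12.
have y2_y1 : antiadjacent th y2 y1 by rewrite antiadjacentC.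
have y2_p2 : antiadjacent th y2 p2 by rewrite antiadjacentC.
have [y1_ne_y2 y1_ne_p2 y1_ne_p3] : [/\ y1 != y2, y1 != p2 & y1 != p3].
  by case/andP: y1_y2; case/andP: y1_p2; case/andP: y1_p3.
have p2_ne_y2 : p2 != y2 by case/andP: p2_y2.
case/orP: (in_X_or_Y p2) => [p2X|p2Y].
  case/orP: (in_X_or_Y p3) => [p3X|p3Y].
    by move: (X_stable _ _ p2X p3X); rewrite p23.
  apply: (anticomponent_no_three y1Y (mem_acomp_self Y y1)
            (antiadjacent_mem_acomp y1Y y2Y y1_y2)
            (antiadjacent_mem_acomp y1Y p3Y y1_p3)) => //; by rewrite eq_sym.
apply: (anticomponent_no_three y2Y (mem_acomp_self Y y2)
          (antiadjacent_mem_acomp y2Y y1Y y2_y1)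
          (antiadjacent_mem_acomp y2Y p2Y y2_p2)) => //; by rewrite eq_sym.
Qed.

End GoodPartition.
End Trigraph.

Theorem proposition4p10 (V : finType) (th : V -> V -> tri)
  (thC : forall u v, th u v = th v u) (X Y : {set V}) :
  good_partition th X Y ->
  (* (1) *)
  (forall y, y \in Y -> acomp th Y y = [set y] ->
     (forall x, x \in X -> antiadjacent th x y -> even_pair th x y) /\
     (forall x1 x2, x1 \in X -> x2 \in X -> adjacent th x1 x2 ->
        (even_pair th x1 y \/ even_pair th x2 y) /\
        (exists u v, even_pair th u v))) /\
  (* (2) *)
  (forall y1 y2, y1 \in Y -> y2 \in Y -> strongly_anti th y1 y2 ->
     (forall a b, a \in X -> b \in X -> ~~ adjacent th a b) ->
     even_pair th y1 y2).
Proof.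
move=> gp; split; last by move=> y1 y2; apply: even_pair_strong_antiedge.
move=> y yY yA; split=> [x xX xy|x1 x2 x1X x2X x12].
  exact: (even_pair_singleton_anticomponent thC gp xX yY yA xy).
have [x1y|x2y] := even_pair_along_edge thC gp x1X x2X yY yA x12.
- by split; [left | exists x1, y].
- by split; [right | exists x2, y].
Qed.
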